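(* For a threshold graph $G$ and an integer $d\ge0$, $\mathrm{degen}(G)=d$ if and only if $\mathrm{seq}(G)$ contains exactly $d$ ones.
   Context: A threshold graph on $n\ge1$ vertices is built from a base vertex $v_0$ by successively adding $v_1,\dots,v_{n-1}$, each either isolated (adjacent to no earlier vertex) or dominating (adjacent to all earlier vertices); its creation sequence $\mathrm{seq}(G)=s_1\cdots s_{n-1}$ has $s_i=1$ if $v_i$ is dominating and $s_i=0$ otherwise. The degeneracy $\mathrm{degen}(G)$ is the maximum over nonempty induced subgraphs $H$ of $G$ of the minimum degree of $H$. *)

From mathcomp Require Import all_boot.
Set Implicit Arguments. Unset Strict Implicit. Unset Printing Implicit Defensive.

(* A simple graph on a finite type T is given by a relation e (assumed
   symmetric and irreflexive where relevant). *)

Definition deg_in (T : finType) (e : rel T) (H : {set T}) (v : T) : nat :=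
  #|[set u in H | e v u]|.

Definition mindeg_in (T : finType) (e : rel T) (H : {set T}) : nat :=
  \big[minn/#|T|]_(v in H) deg_in e H v.

Definition degen (T : finType) (e : rel T) : nat :=
  \max_(H : {set T} | H != set0) mindeg_in e H.

(* Threshold graph with creation sequence s = s_1 ... s_{n-1}:
   vertices v_0, ..., v_{n-1} are 'I_n with n = size s + 1; for i < j,
   v_i and v_j are adjacent iff v_j is dominating, i.e. s_j = true,
   which is (nth false s j.-1) since s is indexed from 1. *)
Definition threshold_adj (s : seq bool) : rel 'I_(size s).+1 :=
  fun i j => ((i < j) && nth false s j.-1) || ((j < i) && nth false s i.-1).
Arguments threshold_adj s : clear implicits.

(* Every vertex of a threshold graph is adjacent to no earlier vertex or to
   all of them, so in any induced subgraph H the earliest vertex of H is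
   adjacent only to later dominating vertices: its degree in H is at most the
   number d of ones in the creation sequence.  Conversely the base vertex
   together with the d dominating vertices forms a clique K_(d+1), an induced
   subgraph of minimum degree d. *)

From mathcomp Require Import all_boot.
Set Implicit Arguments. Unset Strict Implicit. Unset Printing Implicit Defensive.

Lemma big_minn_leq (I : eqType) (r : seq I) (x : nat) (F : I -> nat) (v : I) :
  v \in r -> \big[minn/x]_(u <- r) F u <= F v.
Proof.
elim: r => [|a r IHr] //; rewrite in_cons big_cons => /predU1P[-> | /IHr].
  exact: geq_minl.
exact: leq_trans (geq_minr _ _).
Qed.

Section InducedDegrees.
Variables (T : finType) (e : rel T).

Lemma mindeg_in_le_deg (H : {set T}) (v : T) :
  v \in H -> mindeg_in e H <= deg_in e H v.
Proof.
move=> Hv; rewrite /mindeg_in -big_filter big_minn_leq //.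
by rewrite mem_filter Hv mem_index_enum.
Qed.

(* [k <= #|T|] is needed because [#|T|] is the value of the empty minimum. *)

Lemma deg_in_le_mindeg (H : {set T}) (k : nat) :
  k <= #|T| -> (forall v, v \in H -> k <= deg_in e H v) -> k <= mindeg_in e H.
Proof.
move=> kT kdeg; rewrite /mindeg_in.
by elim/big_ind: _ => // a b ka kb; rewrite leq_min ka kb.
Qed.

Lemma deg_in_clique (H : {set T}) (v : T) :
  {in H &, forall u w, e u w = (u != w)} -> v \in H -> deg_in e H v = #|H|.-1.
Proof.
move=> clique Hv; rewrite /deg_in (cardsD1 v H) Hv add1n /=.
apply: eq_card => u; rewrite !inE andbC.
by case Hu: (u \in H); rewrite ?andbF ?andbT // clique // eq_sym.
Qed.

End InducedDegrees.

Section ThresholdGraph.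
Variable s : seq bool.
Local Notation vertex := 'I_(size s).+1.
Local Notation adj := (threshold_adj s).

Definition dominating : {set vertex} := [set j : vertex | (0 < j) && nth false s j.-1].

Lemma card_dominating : #|dominating| = count id s.
Proof.
rewrite -sum1_card -sum1_count (big_nth false) big_mkord.
rewrite big_mkcond [RHS]big_mkcond big_ord_recl inE /= add0n.
by apply: eq_bigr => i _; rewrite inE.
Qed.

Lemma threshold_adjC (i j : vertex) : adj i j = adj j i.
Proof. by rewrite /threshold_adj orbC. Qed.

Lemma threshold_adj_later (i j : vertex) : i < j -> adj i j = (j \in dominating).
Proof.
move=> ij; rewrite /threshold_adj inE ij (leq_ltn_trans (leq0n i) ij).
by rewrite ltnNge (ltnW ij) orbF.
Qed.

Lemma mindeg_in_threshold_le (H : {set vertex}) :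
  H != set0 -> mindeg_in adj H <= #|dominating|.
Proof.
case/set0Pn => x Hx; have [m Hm m_min] := arg_minnP (fun i : vertex => val i) Hx.
apply: (leq_trans (mindeg_in_le_deg adj Hm)).
apply: subset_leq_card; apply/subsetP => u; rewrite inE => /andP[Hu adj_mu].
have [mu | um | /val_inj mu] := ltngtP m u.
- by rewrite -(threshold_adj_later mu).
- by have := m_min u Hu; rewrite leqNgt um.
- by move: adj_mu; rewrite mu /threshold_adj ltnn.
Qed.

Lemma dominating_clique :
  {in ord0 |: dominating &, forall u v, adj u v = (u != v)}.
Proof.
have later_clique (u v : vertex) : u < v -> v \in ord0 |: dominating ->
    adj u v = (u != v).
  move=> uv; rewrite threshold_adj_later // neq_ltn uv orTb !inE.
  by case/orP=> // /eqP v0; rewrite v0 in uv.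
move=> u v Hu Hv; have [uv | vu | /val_inj ->] := ltngtP u v.
- exact: later_clique.
- by rewrite threshold_adjC eq_sym; apply: later_clique.
- by rewrite eqxx /threshold_adj ltnn.
Qed.

Lemma degen_threshold : degen adj = #|dominating|.
Proof.
apply/eqP; rewrite eqn_leq; apply/andP; split.
  by apply/bigmax_leqP => H; apply: mindeg_in_threshold_le.
have clique_ne : ord0 |: dominating != set0.
  by apply/set0Pn; exists ord0; rewrite setU11.
rewrite (leq_trans _ (leq_bigmax_cond (F := mindeg_in adj) _ clique_ne)) //.
apply: deg_in_le_mindeg => [|v Hv].
  by rewrite -cardsT subset_leq_card ?subsetT.
by rewrite deg_in_clique // ?cardsU1 ?inE //; apply: dominating_clique.
Qed.

End ThresholdGraph.

Theorem mainTheorem12 (s : seq bool) (d : nat) :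
  degen (threshold_adj s) = d <-> count id s = d.
Proof. by rewrite degen_threshold card_dominating. Qed.
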